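(* Let $N,n\ge1$ and let $C(\rho)$ be a matrix with $n$ columns whose entries are polynomials with rational coefficients in $\rho\in\mathbb{R}^N$. Fix a linear way of arranging the entries of a vector $m\in\mathbb{R}^n$ as the entries of a matrix $M=M(m)$. Suppose that for some generic $\rho_0\in\mathbb{R}^N$ there is $m_0$ with $C(\rho_0)m_0=0$ and $\operatorname{rank}M(m_0)=s$. Then for every generic $\rho\in\mathbb{R}^N$ there is $m$ with $C(\rho)m=0$ and $\operatorname{rank}M(m)\ge s$.
   Context: A point $\rho\in\mathbb{R}^N$ is generic if its coordinates satisfy no nonzero polynomial equation with rational coefficients. The arrangement $m\mapsto M(m)$ places each entry of $m$ in a fixed position of the matrix $M$ (the same for all $m$). *)

From HB Require Import structures.
From mathcomp Require Import all_boot all_order all_algebra.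
From mathcomp Require Import reals.
From mathcomp Require Import mpoly.
Set Implicit Arguments. Unset Strict Implicit. Unset Printing Implicit Defensive.
Import Order.TTheory GRing.Theory Num.Theory.
Local Open Scope ring_scope.

Definition evalQ (R : realType) (N : nat) (rho : 'I_N -> R) (P : {mpoly rat[N]}) : R :=
  (map_mpoly (ratr : rat -> R) P).@[rho].

Definition generic (R : realType) (N : nat) (rho : 'I_N -> R) : Prop :=
  forall P : {mpoly rat[N]}, P != 0 -> evalQ rho P != 0.

Definition evalmx (R : realType) (N k n : nat) (C : 'M[{mpoly rat[N]}]_(k, n))
  (rho : 'I_N -> R) : 'M[R]_(k, n) := map_mx (evalQ rho) C.

Definition arrange (R : realType) (n p q : nat) (pos : 'I_n -> 'I_p * 'I_q)
  (m : 'cV[R]_n) : 'M[R]_(p, q) :=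
  \matrix_(i < p, j < q) \sum_(l < n | pos l == (i, j)) m l 0.

(* Work over the field F = Q(x_1, ..., x_N). At a generic point rho the evaluation
   Q[x] -> R is injective, so it extends to a field morphism phi_rho : F -> R, and
   kernels commute with field morphisms: if the rows of B span the row kernel of C^T
   over F, then the kernel of C(rho) consists of the vectors (w phi_rho(B))^T.  So
   m0 = (w B(rho0))^T for a real row w, and w |-> M((w B(rho0))^T) is linear.  The
   condition rank >= s is the nonvanishing of an s x s minor, which is a polynomial
   in each coordinate of w, so the coordinates of w can be replaced one at a time by
   natural numbers.  For such a rational w, v := (w B)^T is a kernel vector of C over
   F, hence phi_rho(v) is one of C(rho) for every generic rho, and M(phi_rho(v)) has
   the rank of M(v) over F, which is its rank at rho0. *)

From HB Require Import structures.
From mathcomp Require Import all_boot all_order all_algebra.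
From mathcomp Require Import reals.
From mathcomp Require Import mpoly.
From mathcomp Require Import zify.
Set Implicit Arguments. Unset Strict Implicit. Unset Printing Implicit Defensive.
Import GRing.Theory Num.Theory.
Local Open Scope ring_scope.
Local Open Scope quotient_scope.
Local Notation "x %:F" := (@FracField.tofrac _ x).

Lemma tofrac_numden (D : idomainType) (x : {fraction D}) :
  x = (repr x).1%:F / (repr x).2%:F.
Proof.
rewrite -[x in LHS]reprK; case: (repr x) => -[a b] /= b0.
unlock FracField.tofrac.
rewrite /GRing.mul /= /GRing.inv /= -FracField.pi_inv -FracField.pi_mul.
apply/eqmodP; rewrite /= FracField.equivfE /FracField.mulf /FracField.invf /=.
by rewrite !numden_Ratio ?mul1r ?oner_neq0 // mulr1 mulrC.
Qed.

Lemma fracP (D : idomainType) (x : {fraction D}) :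
  exists2 ab : D * D, ab.2 != 0 & x = ab.1%:F / ab.2%:F.
Proof. by exists (repr x); [exact: denom_ratioP | exact: tofrac_numden]. Qed.

Section FracLift.
Variables (D : idomainType) (F : fieldType) (g : {rmorphism D -> F}).
Hypothesis g_inj : injective g.

Definition frac_lift (x : {fraction D}) : F := g (repr x).1 / g (repr x).2.

Lemma frac_liftE a b : b != 0 -> frac_lift (a%:F / b%:F) = g a / g b.
Proof.
move=> b0; rewrite /frac_lift; set x := a%:F / b%:F.
have d0 : (repr x).2 != 0 := denom_ratioP _.
have : (repr x).1%:F / (repr x).2%:F == a%:F / b%:F by rewrite -tofrac_numden.
rewrite eqr_div ?tofrac_eq0 // -!tofracM tofrac_eq => /eqP e.
by apply/eqP; rewrite eqr_div ?(raddf_eq0 _ g_inj) // -!rmorphM e.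
Qed.

Lemma frac_lift_tofrac a : frac_lift a%:F = g a.
Proof. by rewrite -[a%:F]divr1 -tofrac1 frac_liftE ?oner_neq0 // rmorph1 divr1. Qed.

Lemma frac_lift_is_zmod_morphism : zmod_morphism frac_lift.
Proof.
move=> x y.
have [[a b] /= b0 ->] := fracP x; have [[c d] /= d0 ->] := fracP y.
rewrite -mulNr addf_div ?tofrac_eq0 // -tofracN -!tofracM -tofracD.
rewrite !frac_liftE ?mulf_neq0 // -mulNr addf_div ?(raddf_eq0 _ g_inj) //.
by rewrite rmorphD !rmorphM rmorphN.
Qed.

Lemma frac_lift_is_monoid_morphism : monoid_morphism frac_lift.
Proof.
split; first by rewrite -tofrac1 frac_lift_tofrac rmorph1.
move=> x y.
have [[a b] /= b0 ->] := fracP x; have [[c d] /= d0 ->] := fracP y.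
by rewrite mulf_div -!tofracM !frac_liftE ?mulf_neq0 // !rmorphM mulf_div.
Qed.

Definition frac_lift_rmorphism : {rmorphism {fraction D} -> F} :=
  HB.pack frac_lift
    (GRing.isZmodMorphism.Build _ _ frac_lift frac_lift_is_zmod_morphism)
    (GRing.isMonoidMorphism.Build _ _ frac_lift frac_lift_is_monoid_morphism).

End FracLift.

Lemma rank_geq_minorP (K : fieldType) p q s (A : 'M[K]_(p, q)) :
  (s <= \rank A)%N <->
  exists (X : 'M_(s, p)) (Y : 'M_(q, s)), \det (X *m A *m Y) != 0.
Proof.
split=> [s_le_r | [X [Y detXAY]]]; last first.
  have XAY_unit : X *m A *m Y \in unitmx by rewrite unitmxE unitfE.
  rewrite -(mxrank_unit XAY_unit).
  exact: leq_trans (mxrankM_maxl _ _) (mxrankM_maxr _ _).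
exists (pid_mx s *m invmx (col_ebase A)), (invmx (row_ebase A) *m pid_mx s).
move: (col_ebase_unit A) (row_ebase_unit A) (mulmx_ebase A).
move: (rank_leq_row A) (rank_leq_col A).
set L := col_ebase A; set U := row_ebase A; set r := \rank A.
move=> r_le_p r_le_q L_unit U_unit <-.
rewrite !mulmxA mulmxKV // -[_ *m U *m _]mulmxA mulmxV // mulmx1.
by rewrite !mul_pid_mx (_ : minn _ _ = s) ?pid_mx_1 ?det1 ?oner_neq0 //; lia.
Qed.

Lemma poly_nat_nonroot (K : numDomainType) (P : {poly K}) :
  P != 0 -> exists k : nat, ~~ root P k%:R.
Proof.
move=> P_neq0; pose ks := [seq (k%:R : K) | k <- iota 0 (size P)].
have ks_uniq : uniq ks.
  by rewrite map_inj_uniq ?iota_uniq // => i j /eqP; rewrite eqr_nat => /eqP.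
have : ~~ all (root P) ks.
  apply/negP => /(max_poly_roots P_neq0)/(_ ks_uniq).
  by rewrite size_map size_iota ltnn.
by case/allPn => _ /mapP[k _ ->]; exists k.
Qed.

Section LinearRankNat.
Variables (K : numFieldType) (n p q s : nat) (F : 'rV[K]_n -> 'M[K]_(p, q)).
Hypothesis F_linear : linear F.

Lemma rank_linear_nat_shift w v a : (s <= \rank (F w))%N ->
  exists k : nat, (s <= \rank (F (w + (k%:R - a) *: v)))%N.
Proof.
move=> /rank_geq_minorP[X [Y det_neq0]].
pose G0 := X *m F w *m Y; pose G1 := X *m F v *m Y.
have minorE t : X *m F (w + t *: v) *m Y = G0 + t *: G1.
  by rewrite addrC F_linear mulmxDr mulmxDl -scalemxAr -scalemxAl addrC.
rewrite -/G0 in det_neq0; clearbody G0 G1.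
pose P := \det (map_mx polyC G0 + ('X - a%:P) *: map_mx polyC G1).
have hornerP t : P.[t] = \det (G0 + (t - a) *: G1).
  rewrite -[P.[t]]/(horner_eval t P) -det_map_mx; congr (\det _).
  by apply/matrixP => i j; rewrite !mxE /= horner_evalE !hornerE.
have P_neq0 : P != 0.
  apply: contraNneq det_neq0 => P0.
  by have := hornerP a; rewrite P0 horner0 subrr scale0r addr0 => <-.
have [k Pk_neq0] := poly_nat_nonroot P_neq0.
by exists k; apply/rank_geq_minorP; exists X, Y; rewrite minorE -hornerP.
Qed.

Lemma rank_linear_nat_row w : (s <= \rank (F w))%N ->
  exists c : 'I_n -> nat, (s <= \rank (F (\row_i (c i)%:R)))%N.
Proof.
move=> s_le_w.
suff [w' w'_nat s_le_w'] : exists2 w' : 'rV[K]_n,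
    forall i : 'I_n, exists k : nat, w' 0 i = k%:R & (s <= \rank (F w'))%N.
  have [c w'E] := fin_all_exists w'_nat; exists c.
  by rewrite (_ : \row_i _ = w') //; apply/rowP => i; rewrite mxE w'E.
suff /(_ n (leqnn n)) [w' w'_nat s_le_w'] : forall j, (j <= n)%N ->
    exists2 w' : 'rV[K]_n, forall i : 'I_n, (i < j)%N -> exists k : nat, w' 0 i = k%:R
      & (s <= \rank (F w'))%N.
  by exists w' => // i; apply: w'_nat.
elim=> [_ | j IHj j_lt_n]; first by exists w.
have [w' w'_nat s_le_w'] := IHj (ltnW j_lt_n); pose i0 := Ordinal j_lt_n.
have [k s_le_w''] := rank_linear_nat_shift (delta_mx 0 i0) (w' 0 i0) s_le_w'.
exists (w' + (k%:R - w' 0 i0) *: delta_mx 0 i0) => // i.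
rewrite ltnS leq_eqVlt -[(i : nat) == j]/(i == i0) !mxE eqxx /=.
case: eqVneq => [-> _ | _ /= i_lt_j]; first by exists k; rewrite mulr1 addrC subrK.
by rewrite mulr0 addr0; apply: w'_nat.
Qed.
End LinearRankNat.

HB.instance Definition _ (R : realType) (N : nat) (rho : 'I_N -> R) :=
  GRing.RMorphism.copy (evalQ rho) (meval rho \o map_mpoly (ratr : rat -> R)).

Lemma evalQ_inj (R : realType) (N : nat) (rho : 'I_N -> R) :
  generic rho -> injective (evalQ rho).
Proof.
move=> rho_gen P Q PQ; apply/eqP; rewrite -subr_eq0; apply/contraT => /rho_gen.
by rewrite rmorphB /= PQ subrr eqxx.
Qed.

Definition evalF (R : realType) (N : nat) (rho : 'I_N -> R) (rho_gen : generic rho) :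
  {rmorphism {fraction {mpoly rat[N]}} -> R} := frac_lift_rmorphism (evalQ_inj rho_gen).

Lemma evalmx_evalF (R : realType) (N k n : nat) (C : 'M[{mpoly rat[N]}]_(k, n))
    (rho : 'I_N -> R) (rho_gen : generic rho) :
  evalmx C rho = map_mx (evalF rho_gen) (map_mx (@FracField.tofrac _) C).
Proof.
apply/matrixP => i j; rewrite !mxE.
exact: (esym (frac_lift_tofrac (evalQ_inj rho_gen) _)).
Qed.

Lemma mulmx_tr_kermx (K : fieldType) k n (A : 'M[K]_(k, n)) (v : 'rV[K]_n) :
  A *m (v *m kermx A^T)^T = 0.
Proof. by apply: trmx_inj; rewrite trmx_mul trmxK -mulmxA mulmx_ker mulmx0 trmx0. Qed.

Section Arrange.
Variables (n p q : nat) (pos : 'I_n -> 'I_p * 'I_q).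

(* [arrange] over an arbitrary ring; over a [realType] the two coincide definitionally. *)
Definition garrange (K : nzRingType) (v : 'cV[K]_n) : 'M[K]_(p, q) :=
  \matrix_(i < p, j < q) \sum_(l < n | pos l == (i, j)) v l 0.

Lemma garrange_linear (K : nzRingType) : linear (@garrange K).
Proof.
move=> a u v; apply/matrixP => i j; rewrite !mxE mulr_sumr -big_split.
by apply: eq_bigr => l _; rewrite !mxE.
Qed.

Lemma rank_arrange_map (K : fieldType) (R : realType) (f : {rmorphism K -> R})
    (v : 'cV[K]_n) :
  \rank (arrange pos (map_mx f v)) = \rank (garrange v).
Proof.
rewrite -(mxrank_map f); congr (\rank _); apply/matrixP => i j.
by rewrite !mxE rmorph_sum; apply: eq_bigr => l _; rewrite mxE.
Qed.
End Arrange.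

Theorem propositionA1 (R : realType) (N n k p q : nat)
  (hN : (1 <= N)%N) (hn : (1 <= n)%N)
  (C : 'M[{mpoly rat[N]}]_(k, n))
  (pos : 'I_n -> 'I_p * 'I_q) (pos_inj : injective pos)
  (s : nat) (rho0 : 'I_N -> R) (m0 : 'cV[R]_n) :
  generic rho0 ->
  evalmx C rho0 *m m0 = 0 ->
  \rank (arrange pos m0) = s ->
  forall rho : 'I_N -> R, generic rho ->
    exists m : 'cV[R]_n, evalmx C rho *m m = 0 /\ (s <= \rank (arrange pos m))%N.
Proof.
move=> rho0_gen Cm0 rank_m0 rho rho_gen.
pose B := kermx (map_mx (@FracField.tofrac _) C)^T.
have /submxP[w m0E] : (m0^T <= map_mx (evalF rho0_gen) B)%MS.
  by rewrite map_kermx -map_trmx -(evalmx_evalF C) sub_kermx -trmx_mul Cm0 trmx0.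
pose L v := arrange pos (v *m map_mx (evalF rho0_gen) B)^T.
have L_linear : linear L.
  by move=> a u v; rewrite /L mulmxDl -scalemxAl linearD linearZ; apply: garrange_linear.
have rank_Lw : (s <= \rank (L w))%N by rewrite /L -m0E trmxK rank_m0.
have [c rank_c] := rank_linear_nat_row L_linear rank_Lw.
exists (map_mx (evalF rho_gen) (\row_i (c i)%:R *m B))^T; split.
  by rewrite (evalmx_evalF _ rho_gen) map_trmx -map_mxM mulmx_tr_kermx map_mx0.
rewrite map_trmx rank_arrange_map -(rank_arrange_map pos (evalF rho0_gen)).
rewrite -map_trmx map_mxM (_ : map_mx _ _ = \row_i (c i)%:R) //.
by apply/rowP => i; rewrite !mxE rmorph_nat.
Qed.
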